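(* Let $n>k\ge 1$ be integers, not both even, such that $n\neq Mk$ for every positive integer $M$ (i.e. $k$ does not divide $n$). Let $\alpha=\lceil n/2\rceil-\lfloor (n-k)/2\rfloor$, $\beta=k-\alpha$, and $G=\sqrt{n/k}\,W_n^H\Sigma W_k$. Let $G_k$ be any $k\times k$ submatrix of $G$ formed by $k$ distinct rows of $G$. Then the smallest eigenvalue of $G_kG_k^H$ is strictly less than $1$ and the largest eigenvalue of $G_kG_k^H$ is strictly greater than $1$.
   Context: For a positive integer $l$, $W_l$ denotes the unitary $l\times l$ DFT matrix, $(W_l)_{r,s}=\frac{1}{\sqrt l}e^{-j2\pi(r-1)(s-1)/l}$, and $^H$ denotes conjugate transpose. $\Sigma$ is the $n\times k$ matrix $\begin{pmatrix} I_\alpha & 0\\ 0 & 0\\ 0 & I_\beta\end{pmatrix}$: its first $\alpha$ rows are $(I_\alpha\ 0)$, its last $\beta$ rows are $(0\ I_\beta)$, and its middle $n-k$ rows are zero. *)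

From HB Require Import structures.
From mathcomp Require Import all_boot all_order all_algebra.
From mathcomp Require Import complex.
From mathcomp Require Import all_classical all_reals.
From mathcomp Require Import trigo.
Set Implicit Arguments. Unset Strict Implicit. Unset Printing Implicit Defensive.
Import Order.TTheory GRing.Theory Num.Theory ComplexField.
Local Open Scope ring_scope.
Local Open Scope complex_scope.

Definition adjmx (R : rcfType) (m p : nat) (A : 'M[R[i]]_(m, p)) : 'M[R[i]]_(p, m) :=
  map_mx Num.conj A^T.

Definition dft (R : realType) (l : nat) : 'M[R[i]]_l :=
  \matrix_(r < l, s < l)
    let th : R := 2 * pi * (r%:R * s%:R) / l%:R in
    ((Num.sqrt (l%:R : R))^-1)%:C * ((cos th)%:C - 'i * (sin th)%:C).

Definition alphaD (n k : nat) : nat := uphalf n - (n - k)./2.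
Definition betaD (n k : nat) : nat := k - alphaD n k.

(* Sigma : n x k, first alpha rows (I_alpha 0), last beta rows (0 I_beta), middle zero *)
Definition Sigma (R : rcfType) (n k : nat) : 'M[R[i]]_(n, k) :=
  \matrix_(r < n, c < k)
    (((r < alphaD n k)%N && (c == r :> nat))
     || ((n - betaD n k <= r)%N && (c + (n - k) == r)%N))%:R.

Definition Gmx (R : realType) (n k : nat) : 'M[R[i]]_(n, k) :=
  (Num.sqrt (n%:R / k%:R : R))%:C *: (adjmx (dft R n) *m Sigma R n k *m dft R k).

From HB Require Import structures.
From mathcomp Require Import all_boot all_order all_algebra.
From mathcomp Require Import complex.
From mathcomp Require Import all_classical all_reals.
From mathcomp Require Import trigo.
From mathcomp Require Import ring zify.
Import Order.TTheory GRing.Theory Num.Theory ComplexField.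
Set Implicit Arguments. Unset Strict Implicit. Unset Printing Implicit Defensive.

(* W_n^H Sigma Sigma^H W_n is circulant: with omega = exp(2 pi j / n), the entry (a, b) of
   G G^H is (1/k) sum_{s in S} omega^((a - b) s), where S, the support of Sigma Sigma^H,
   is an arc of k consecutive residues modulo n.  Up to a unimodular factor this is the
   geometric sum sum_{t < k} omega^((a - b) t).  So P = G_k G_k^H is Hermitian with unit
   diagonal: its real eigenvalues have mean 1, and if they all lay on one side of 1 they
   would all be 1, making P - I Hermitian and nilpotent, i.e. P = I.  But an off-diagonal
   zero forces omega^((a - b) k) = 1, i.e. a k = b k (mod n); if this held for all k
   distinct rows, their residues modulo n / gcd(n, k) would coincide and their quotients
   would be k distinct numbers below gcd(n, k), whence k | n. *)

Lemma dvdn_of_mulmod_eq n k (f : 'I_k -> 'I_n) : injective f -> (0 < k)%N ->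
  (forall i j, f i * k = f j * k %[mod n]) -> k %| n.
Proof.
move=> finj k0 fk.
have n0 : (0 < n)%N := leq_ltn_trans (leq0n _) (ltn_ord (f (Ordinal k0))).
set g := gcdn n k; set n' := n %/ g.
have g0 : (0 < g)%N by rewrite gcdn_gt0 n0.
have nE : n = (n' * g)%N by rewrite /n' divnK // dvdn_gcdl.
have n'0 : (0 < n')%N by rewrite /n' divn_gt0 // dvdn_leq // dvdn_gcdl.
have dvd_diff i j : (f j <= f i)%N -> n' %| f i - f j.
  move=> le; have /eqP := fk i j.
  rewrite eqn_mod_dvd ?leq_mul2r ?le ?orbT // -mulnBl => h.
  have : n %| (f i - f j) * g.
    by rewrite /g gcdnC muln_gcdr dvdn_gcd h /= dvdn_mull.
  by rewrite {1}nE dvdn_pmul2r.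
have same_mod i j : f i %% n' = f j %% n'.
  case/orP: (leq_total (f j) (f i)) => le; first by apply/eqP; rewrite eqn_mod_dvd ?dvd_diff.
  by apply/esym/eqP; rewrite eqn_mod_dvd ?dvd_diff.
have quot_lt i : (f i %/ n' < g)%N by rewrite ltn_divLR // mulnC -nE.
have quot_inj : injective (fun i => Ordinal (quot_lt i)).
  move=> i j /(congr1 val) /= e; apply: finj; apply: ord_inj.
  by rewrite (divn_eq (f i) n') (divn_eq (f j) n') e (same_mod i j).
have kg : (k <= g)%N by have := leq_card _ quot_inj; rewrite !card_ord.
have -> : k = g by apply/eqP; rewrite eqn_leq kg dvdn_leq // dvdn_gcdr.
exact: dvdn_gcdl.
Qed.

Local Open Scope ring_scope.

Lemma sum_expr_root_eq0 (F : idomainType) (x : F) m :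
  x ^+ m = 1 -> x != 1 -> \sum_(s < m) x ^+ s = 0.
Proof.
move=> xm x1; have := subrX1 x m; rewrite xm subrr => /esym /eqP.
by rewrite mulf_eq0 subr_eq0 (negbTE x1) /= => /eqP.
Qed.

Lemma sum_arc_expr (F : comRingType) (x : F) n a b : (a + b <= n)%N -> x ^+ n = 1 ->
  x ^+ b * \sum_(s < n) ((s < a) || (n - b <= s))%N%:R * x ^+ s = \sum_(t < a + b) x ^+ t.
Proof.
move=> abn xn.
rewrite -(big_mkord xpredT (fun s => ((s < a) || (n - b <= s))%N%:R * x ^+ s)).
rewrite (big_cat_nat (n := a)) /=; [|lia|lia].
rewrite (big_cat_nat (n := n - b) (m := a)) /=; [|lia|lia].
have -> : \sum_(0 <= i < a) ((i < a) || (n - b <= i))%N%:R * x ^+ i = \sum_(0 <= i < a) x ^+ i.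
  by apply: eq_big_nat => i /andP[_ ia]; rewrite ia mul1r.
have -> : \sum_(a <= i < n - b) ((i < a) || (n - b <= i))%N%:R * x ^+ i = 0.
  rewrite big1_seq // => i /andP[_]; rewrite mem_iota => /andP[ai ib].
  have -> : ((i < a) || (n - b <= i))%N = false by lia.
  by rewrite mul0r.
have -> : \sum_(n - b <= i < n) ((i < a) || (n - b <= i))%N%:R * x ^+ i =
          \sum_(0 <= i < b) x ^+ (i + (n - b)).
  rewrite -[X in \sum_(X <= _ < _) _](add0n (n - b)%N) big_addn.
  have -> : (n - (n - b) = b)%N by lia.
  apply: eq_big_nat => i /andP[_ ib].
  by rewrite (_ : (n - b <= i + (n - b))%N) ?orbT ?mul1r //; lia.
rewrite add0r mulrDr !mulr_sumr.
rewrite -(big_mkord xpredT) [in RHS](big_cat_nat (n := b)) /=; [|lia|lia].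
rewrite addrC; congr (_ + _).
  have -> : \sum_(b <= i < a + b) x ^+ i = \sum_(0 <= i < a) x ^+ (i + b).
    by rewrite -{1}[b]add0n big_addn addnK.
  by apply: eq_big_nat => i _; rewrite -exprD addnC.
apply: eq_big_nat => i /andP[_ ib].
(* [x ^+ n = 1] wraps the tail of the arc around to the front. *)
rewrite -exprD (_ : (b + (i + (n - b)) = i + n)%N); last by lia.
by rewrite exprD xn mulr1.
Qed.

Lemma sqr_invsqrt (R : rcfType) (x : R) : 0 <= x -> (Num.sqrt x)^-1 ^+ 2 = x^-1.
Proof. by move=> x0; rewrite exprVn sqr_sqrtr. Qed.

Local Open Scope complex_scope.

Section Adjoint.
Variable R : rcfType.
Local Notation C := R[i].

Lemma conjC_real (x : R) : Num.conj (x%:C : C) = x%:C.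
Proof. by rewrite conj_Creal // complex_real. Qed.

Lemma adjmxE m p (A : 'M[C]_(m, p)) i j : adjmx A i j = Num.conj (A j i).
Proof. by rewrite /adjmx !mxE. Qed.

Lemma adjmx_mul m p q (A : 'M[C]_(m, p)) (B : 'M[C]_(p, q)) :
  adjmx (A *m B) = adjmx B *m adjmx A.
Proof. by rewrite /adjmx trmx_mul map_mxM. Qed.

Lemma adjmxZ m p (a : C) (A : 'M[C]_(m, p)) : adjmx (a *: A) = Num.conj a *: adjmx A.
Proof. by apply/matrixP => i j; rewrite !mxE rmorphM. Qed.

Lemma adjmxK m p (A : 'M[C]_(m, p)) : adjmx (adjmx A) = A.
Proof. by apply/matrixP => i j; rewrite !adjmxE conjCK. Qed.

Lemma rowsub_mul_adjE m n k (f : 'I_k -> 'I_n) (A : 'M[C]_(n, m)) i j :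
  (rowsub f A *m adjmx (rowsub f A)) i j = (A *m adjmx A) (f i) (f j).
Proof. by rewrite !mxE; apply: eq_bigr => c _; rewrite !adjmxE !mxE. Qed.

End Adjoint.

Section RootOfUnity.
Variable R : realType.
Local Notation C := R[i].

Definition expi (t : R) : C := cos t +i* sin t.

Lemma expiD x y : expi (x + y) = expi x * expi y.
Proof.
rewrite /expi cosD sinD; apply/eqP; rewrite eq_complex /=.
by apply/andP; split; apply/eqP; ring.
Qed.

Lemma expiMn t m : expi (t *+ m) = expi t ^+ m.
Proof.
elim: m => [|m IHm]; first by rewrite mulr0n /expi cos0 sin0 expr0.
by rewrite mulrS expiD IHm exprS.
Qed.

Lemma conj_expi t : Num.conj (expi t) = (cos t)%:C - 'i * (sin t)%:C.
Proof. by rewrite /expi /=; apply/eqP; rewrite eq_complex /=; simpc. Qed.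

Lemma conj_expiM t : Num.conj (expi t) * expi t = 1.
Proof.
rewrite /expi /=; apply/eqP; rewrite eq_complex /=; simpc.
by rewrite -!expr2 cos2Dsin2 eqxx /= mulrC subrr.
Qed.

Lemma expi_neq1 t : 0 < t < pi *+ 2 -> expi t != 1.
Proof.
move=> /andP[t0 t2]; apply/negP => /eqP [c s].
have [tpi|tpi|tpi] := ltgtP t pi.
- by have := @sin_gt0_pi R t; rewrite t0 tpi s ltxx => /(_ isT).
- have : 0 < sin (t - pi).
    by apply: sin_gt0_pi; apply/andP; split; rewrite ?subr_gt0 // ltrBlDr -mulr2n.
  have -> : sin (t - pi) = - sin t.
    by have := sinDpi (t - pi); rewrite subrK => ->; rewrite opprK.
  by rewrite s oppr0 ltxx.
- move: c; rewrite tpi cospi => /eqP.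
  by rewrite -subr_eq0 -opprD oppr_eq0 -(natrD _ 1 1) pnatr_eq0.
Qed.

Definition omega l : C := expi (pi *+ 2 / l%:R).

Lemma omega_prim l : (0 < l)%N -> l.-primitive_root (omega l).
Proof.
move=> l0; apply/andP; split => //; apply/forallP => i; apply/eqP.
rewrite unity_rootE -expiMn.
have lR : (l%:R : R) != 0 by rewrite pnatr_eq0 -lt0n.
case: (ltngtP i.+1 l) => [il|il|->].
- apply/negbTE/expi_neq1.
  have pi0 := @pi_gt0 R; have lgt : (0 : R) < l%:R by rewrite ltr0n.
  apply/andP; split; first by rewrite pmulrn_rgt0 // divr_gt0 // pmulrn_rgt0.
  rewrite -mulrnAl ltr_pdivrMr // mulr_natr -subr_gt0 -mulrnBr; last exact: ltnW.
  by rewrite pmulrn_rgt0 ?subn_gt0 // pmulrn_rgt0.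
- by have := ltn_ord i; lia.
- by rewrite -[X in expi X]mulr_natr mulfVK // /expi cos2pi sin2pi eqxx.
Qed.

Lemma omegaX_conjM l a : Num.conj (omega l ^+ a) * omega l ^+ a = 1.
Proof. by rewrite -expiMn conj_expiM. Qed.

Lemma dftE l (r s : 'I_l) :
  dft R l r s = ((Num.sqrt (l%:R : R))^-1)%:C * Num.conj (omega l ^+ (r * s)).
Proof.
rewrite /dft mxE -expiMn conj_expi /=.
suff -> : 2 * pi * ((r : nat)%:R * (s : nat)%:R) / l%:R = pi *+ 2 / l%:R *+ (r * s) :> R by [].
by move: (pi : R) => p; ring.
Qed.

(* [phase l a b] is [omega l ^+ (b - a)], which we cannot write with [nat] exponents. *)
Definition phase l a b : C := Num.conj (omega l ^+ a) * omega l ^+ b.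

Lemma phaseX l a b m : phase l a b ^+ m = phase l (a * m) (b * m).
Proof. by rewrite /phase exprMn -rmorphXn -!exprM. Qed.

Lemma phase_eq1 l a b : (0 < l)%N -> (phase l a b == 1) = (a == b %[mod l]).
Proof.
move=> l0; rewrite -(eq_prim_root_expr (omega_prim l0)) /phase.
apply/eqP/eqP => [h|->]; last exact: omegaX_conjM.
by rewrite -[omega l ^+ a]mulr1 -h mulrA (mulrC (omega l ^+ a)) omegaX_conjM mul1r.
Qed.

Lemma phase_order l a b : (0 < l)%N -> phase l a b ^+ l = 1.
Proof.
move=> l0; rewrite phaseX /phase mulnC (mulnC b) !exprM.
by rewrite !(prim_expr_order (omega_prim l0)) !expr1n rmorph1 mulr1.
Qed.

Lemma dft_unitary l : (0 < l)%N -> dft R l *m adjmx (dft R l) = 1%:M.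
Proof.
move=> l0; apply/matrixP => r t; rewrite !mxE.
set c := (Num.sqrt (l%:R : R))^-1.
transitivity (\sum_(s < l) (c ^+ 2)%:C * phase l r t ^+ s).
  apply: eq_bigr => s _; rewrite adjmxE !dftE phaseX /phase rmorphM /= conjC_real conjCK.
  by rewrite rmorphXn /=; ring.
rewrite -mulr_sumr; case: eqP => [<-|/eqP rt].
  rewrite /phase omegaX_conjM; under eq_bigr do rewrite expr1n.
  rewrite sumr_const card_ord /c sqr_invsqrt ?ler0n //.
  by rewrite -(rmorph_nat (real_complex R)) -rmorphM /= mulVf // pnatr_eq0 -lt0n.
by rewrite sum_expr_root_eq0 ?mulr0 ?phase_order // phase_eq1 // !modn_small.
Qed.

End RootOfUnity.

Definition Sigma_support n k s : bool := (s < alphaD n k)%N || (n - betaD n k <= s)%N.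

Lemma alphaD_le n k : (0 < k)%N -> (k <= n)%N -> (alphaD n k <= k)%N.
Proof. rewrite /alphaD => *; lia. Qed.

Lemma sum_Sigma_support (F : comRingType) (x : F) n k :
  (0 < k)%N -> (k <= n)%N -> x ^+ n = 1 ->
  x ^+ betaD n k * \sum_(s < n) (Sigma_support n k s)%:R * x ^+ s = \sum_(t < k) x ^+ t.
Proof.
move=> k0 kn xn; have ak := alphaD_le k0 kn.
by rewrite sum_arc_expr // /betaD subnKC.
Qed.

Section GramMatrix.
Variable R : realType.
Local Notation C := R[i].

Lemma Sigma_mul_adj n k : (0 < k)%N -> (k <= n)%N ->
  Sigma R n k *m adjmx (Sigma R n k) = diag_mx (\row_s (Sigma_support n k s)%:R).
Proof.
move=> k0 kn; have ak := alphaD_le k0 kn.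
apply/matrixP => s t; rewrite !mxE.
under eq_bigr do rewrite adjmxE !mxE conjC_nat -natrM mulnb.
rewrite /Sigma_support /betaD; move: (alphaD n k) ak => a ak.
(* each row of [Sigma] has at most one nonzero entry, in column [g] *)
set g := if (s < a)%N then (s : nat) else (s - (n - k))%N.
have entry (c : 'I_k) : ((s < a) && (c == s :> nat) || (n - (k - a) <= s) && (c + (n - k) == s))%N &&
    ((t < a) && (c == t :> nat) || (n - (k - a) <= t) && (c + (n - k) == t))%N =
    [&& s == t :> nat, ((s < a) || (n - (k - a) <= s))%N & c == g :> nat].
  have := ltn_ord c; have := ltn_ord s; have := ltn_ord t; rewrite /g.
  by case: ifP => h; lia.
under eq_bigr do rewrite entry.
have [/andP[st sS]|h] := boolP [&& s == t :> nat & ((s < a) || (n - (k - a) <= s))%N].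
  have gk : (g < k)%N by rewrite /g; case: ifP => h; have := ltn_ord s; lia.
  rewrite (bigD1 (Ordinal gk)) //= st sS eqxx /= big1 ?addr0.
    by rewrite val_eqE in st; rewrite -(eqP st) eqxx mulr1n.
  by move=> c /negbTE; rewrite -val_eqE /= => ->; rewrite ?andbF.
rewrite big1; last first.
  by move=> c _; apply/eqP; rewrite pnatr_eq0 eqb0; apply: contra h => /and3P[-> -> _].
case: (eqVneq s t) h => [-> /= h|st _]; last by rewrite mulr0n.
by rewrite eqxx /= in h; rewrite (negbTE h).
Qed.

Lemma Gmx_mul_adjE n k (a b : 'I_n) : (0 < k)%N -> (k < n)%N ->
  (Gmx R n k *m adjmx (Gmx R n k)) a b =
  (k%:R^-1)%:C * \sum_(s < n) (Sigma_support n k s)%:R * phase R n b a ^+ s.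
Proof.
move=> k0 kn; have n0 : (0 < n)%N := ltn_trans k0 kn; have kn' := ltnW kn.
have -> : (k%:R^-1 : R) = Num.sqrt (n%:R / k%:R) ^+ 2 * (Num.sqrt n%:R)^-1 ^+ 2.
  rewrite sqr_invsqrt ?ler0n // sqr_sqrtr ?divr_ge0 ?ler0n //.
  by rewrite mulrAC mulfV ?mul1r // pnatr_eq0 -lt0n.
rewrite /Gmx adjmxZ conjC_real -scalemxAl -scalemxAr scalerA !adjmx_mul adjmxK.
set A := adjmx (dft R n); set S := Sigma R n k; set W := dft R k.
rewrite !mulmxA -(mulmxA (A *m S)) dft_unitary // mulmx1 -(mulmxA A) Sigma_mul_adj //.
rewrite mxE mul_mx_diag mxE !mulr_sumr; apply: eq_bigr => s _.
rewrite mxE /A adjmxE !dftE mxE phaseX /phase rmorphM /= conjC_real conjCK.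
rewrite (mulnC b) (mulnC a) [in RHS]rmorphM /= [in RHS]rmorphXn /= [in RHS]rmorphXn /=.
ring.
Qed.

Lemma Gmx_mul_adj_geometric n k (a b : 'I_n) : (0 < k)%N -> (k < n)%N ->
  (k%:R)%:C * (Gmx R n k *m adjmx (Gmx R n k)) a b * phase R n b a ^+ betaD n k =
  \sum_(t < k) phase R n b a ^+ t.
Proof.
move=> k0 kn; have n0 : (0 < n)%N := ltn_trans k0 kn.
rewrite Gmx_mul_adjE // mulrA -rmorphM /= mulfV ?pnatr_eq0 -?lt0n // mul1r mulrC.
by rewrite sum_Sigma_support ?phase_order // ltnW.
Qed.

Lemma Gmx_mul_adj_diag n k (a : 'I_n) : (0 < k)%N -> (k < n)%N ->
  (Gmx R n k *m adjmx (Gmx R n k)) a a = 1.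
Proof.
move=> k0 kn; have := Gmx_mul_adj_geometric a a k0 kn.
rewrite /phase omegaX_conjM expr1n mulr1; under eq_bigr do rewrite expr1n.
rewrite sumr_const card_ord rmorph_nat -{2}[_ *+ k]mulr1 => /mulfI; apply.
by rewrite pnatr_eq0 -lt0n.
Qed.

Lemma Gmx_mul_adj_eq0 n k (a b : 'I_n) : (0 < k)%N -> (k < n)%N ->
  (Gmx R n k *m adjmx (Gmx R n k)) a b = 0 -> a * k = b * k %[mod n].
Proof.
move=> k0 kn ab0; have n0 : (0 < n)%N := ltn_trans k0 kn.
have := Gmx_mul_adj_geometric a b k0 kn; rewrite ab0 mulr0 mul0r => /esym geom0.
have := subrX1 (phase R n b a) k; rewrite geom0 mulr0 => /eqP.
by rewrite subr_eq0 phaseX phase_eq1 // eq_sym => /eqP.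
Qed.

End GramMatrix.

Section HermitianSpectrum.
Variable R : rcfType.
Local Notation C := R[i].

Lemma hermitian_sqr_eq0 m (Q : 'M[C]_m) : adjmx Q = Q -> Q *m Q = 0 -> Q = 0.
Proof.
move=> hQ QQ; apply/matrixP => i j; rewrite mxE.
have : (Q *m adjmx Q) i i == 0 by rewrite hQ QQ mxE.
rewrite mxE psumr_eq0; last by move=> l _; rewrite adjmxE mul_conjC_ge0.
move=> /allP /(_ j (mem_index_enum _)) /=.
by rewrite adjmxE mul_conjC_eq0 => /eqP.
Qed.

Lemma hermitianX m (Q : 'M[C]_m.+1) e : adjmx Q = Q -> adjmx (Q ^+ e) = Q ^+ e.
Proof.
move=> hQ; elim: e => [|e IHe].
  by rewrite !expr0; apply/matrixP => i j; rewrite adjmxE !mxE rmorph_nat eq_sym.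
by rewrite exprS -mulmxE adjmx_mul IHe hQ mulmxE -exprSr exprS.
Qed.

Lemma hermitian_nilpotent_eq0 m (Q : 'M[C]_m.+1) e : adjmx Q = Q -> Q ^+ e.+1 = 0 -> Q = 0.
Proof.
move=> hQ; elim: e => [|e IHe]; first by rewrite expr1.
move=> Qe0; apply: IHe; apply: hermitian_sqr_eq0; first exact: hermitianX.
by rewrite mulmxE -exprD (_ : (e.+1 + e.+1 = e.+2 + e)%N) ?exprD ?Qe0 ?mul0r //; lia.
Qed.

Lemma hermitian_eigenvalue_real m (P : 'M[C]_m) a :
  adjmx P = P -> eigenvalue P a -> a \is Num.real.
Proof.
move=> hP /eigenvalueP [v vP v0]; rewrite CrealE.
set t := (v *m adjmx v) 0 0.
have tJ : Num.conj t = t by rewrite /t -adjmxE adjmx_mul adjmxK.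
have t0 : t != 0.
  apply: contra v0 => /eqP; rewrite /t mxE => /eqP.
  rewrite psumr_eq0; last by move=> l _; rewrite adjmxE mul_conjC_ge0.
  move=> /allP vv0; apply/eqP/matrixP => i j; rewrite (ord1 i) mxE.
  by have := vv0 j (mem_index_enum _); rewrite /= adjmxE mul_conjC_eq0 => /eqP.
(* [v P v^H = a (v v^H)] is self-conjugate and [v v^H] is real and nonzero. *)
have vPv : (v *m P *m adjmx v) 0 0 = a * t by rewrite vP -scalemxAl mxE.
have : Num.conj ((v *m P *m adjmx v) 0 0) = (v *m P *m adjmx v) 0 0.
  by rewrite -adjmxE !adjmx_mul adjmxK hP mulmxA.
rewrite vPv rmorphM /= tJ => /eqP; rewrite -subr_eq0 -mulrBl mulf_eq0 (negbTE t0) orbF.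
by rewrite subr_eq0.
Qed.

Lemma char_poly_split m (A : 'M[C]_m) :
  exists2 rs : seq C, char_poly A = \prod_(z <- rs) ('X - z%:P) & size rs = m.
Proof.
have [rs rsE] := closed_field_poly_normal (char_poly A).
rewrite (monicP (char_poly_monic A)) scale1r in rsE; exists rs => //.
by have := size_char_poly A; rewrite rsE size_prod_XsubC => -[].
Qed.

Lemma real_seq_min (s : seq C) : s != [::] -> all (mem Num.real) s ->
  exists2 x, x \in s & forall y, y \in s -> x <= y.
Proof.
elim: s => [//|a s IHs] _ /= /andP[ar sr].
have [->|sn] := eqVneq s [::].
  by exists a; rewrite ?mem_head // => y; rewrite inE => /eqP ->.
have [x xs xm] := IHs sn sr.
have [ax|xa] := orP (real_leVge ar (allP sr x xs)).
  exists a; first exact: mem_head.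
  by move=> y; rewrite inE => /orP[/eqP ->//|/xm]; apply: le_trans.
exists x; first by rewrite inE xs orbT.
by move=> y; rewrite inE => /orP[/eqP ->//|/xm].
Qed.

Lemma real_seq_max (s : seq C) : s != [::] -> all (mem Num.real) s ->
  exists2 x, x \in s & forall y, y \in s -> y <= x.
Proof.
move=> s0 sr; have Ns0 : [seq - y | y <- s] != [::] by case: s s0 {sr}.
have Nsr : all (mem Num.real) [seq - y | y <- s].
  by apply/allP => _ /mapP[y ys ->]; have := allP sr y ys; rewrite !inE realN.
have [_ /mapP[x xs ->] xm] := real_seq_min Ns0 Nsr; exists x => // y ys.
by rewrite -lerN2 xm // map_f.
Qed.

Section UnitDiagonal.
Variables (m : nat) (P : 'M[C]_m.+1).
Hypotheses (hermP : adjmx P = P) (diagP : forall i, P i i = 1).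

Lemma unit_diag_one_sided_eq1 :
  (forall mu, eigenvalue P mu -> 1 <= mu) \/ (forall mu, eigenvalue P mu -> mu <= 1) ->
  P = 1%:M.
Proof.
move=> one_sided; have [rs rsE szrs] := char_poly_split P.
have eigE mu : eigenvalue P mu = (mu \in rs).
  by rewrite eigenvalue_root_char rsE root_prod_XsubC.
have sum_rs : \sum_(z <- rs) z = \sum_(z <- rs) 1.
  have rs0 : size rs != 0%N by rewrite szrs.
  rewrite big_const_seq count_predT iter_addr_0 szrs.
  have := char_poly_trace P (ltn0Sn m); rewrite rsE.
  rewrite -[m]/((m.+1).-1) -{1}szrs coefPn_prod_XsubC // => /oppr_inj ->.
  by rewrite /mxtrace; under eq_bigr do rewrite diagP; rewrite sumr_const card_ord.
have rs1 z : z \in rs -> z = 1.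
  case: one_sided => h zs.
    have : \sum_(z <- rs) (z - 1) == 0 by rewrite sumrB sum_rs subrr.
    rewrite big_seq psumr_eq0 => [|y ys]; last by rewrite subr_ge0 h ?eigE.
    by move=> /allP /(_ z zs); rewrite zs subr_eq0 => /eqP.
  have : \sum_(z <- rs) (1 - z) == 0 by rewrite sumrB sum_rs subrr.
  rewrite big_seq psumr_eq0 => [|y ys]; last by rewrite subr_ge0 h ?eigE.
  by move=> /allP /(_ z zs); rewrite zs subr_eq0 => /eqP.
have cpE : char_poly P = ('X - 1%:P) ^+ m.+1.
  rewrite rsE (eq_big_seq (fun=> 'X - 1%:P)); last by move=> z /rs1 ->.
  by rewrite big_const_seq count_predT iter_mulr_1 szrs.
have := Cayley_Hamilton P; rewrite cpE rmorphXn rmorphB /= horner_mx_X horner_mx_C.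
move=> /hermitian_nilpotent_eq0 P1; apply/eqP; rewrite -subr_eq0; apply/eqP/P1.
apply/matrixP => i j; rewrite adjmxE !mxE rmorphB /= -adjmxE hermP.
by rewrite rmorphMn rmorph1 eq_sym.
Qed.

Lemma unit_diag_eigenvalue_spread : P != 1%:M ->
  (exists lmin : C, eigenvalue P lmin /\
     (forall mu, eigenvalue P mu -> lmin <= mu) /\ lmin < 1) /\
  (exists lmax : C, eigenvalue P lmax /\
     (forall mu, eigenvalue P mu -> mu <= lmax) /\ 1 < lmax).
Proof.
move=> P1; have [rs rsE szrs] := char_poly_split P.
have eigE mu : eigenvalue P mu = (mu \in rs).
  by rewrite eigenvalue_root_char rsE root_prod_XsubC.
have rs_real : all (mem Num.real) rs.
  by apply/allP => x; rewrite -eigE; apply: hermitian_eigenvalue_real.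
have rs0 : rs != [::] by rewrite -size_eq0 szrs.
split.
  have [x xs xm] := real_seq_min rs0 rs_real.
  have xr : x \is Num.real := allP rs_real x xs.
  exists x; split; first by rewrite eigE.
  split=> [mu|]; first by rewrite eigE => /xm.
  rewrite real_ltNge ?real1 //; apply: contra P1 => x1; apply/eqP.
  by apply: unit_diag_one_sided_eq1; left => mu; rewrite eigE => /xm; apply: le_trans.
have [x xs xm] := real_seq_max rs0 rs_real.
have xr : x \is Num.real := allP rs_real x xs.
exists x; split; first by rewrite eigE.
split=> [mu|]; first by rewrite eigE => /xm.
rewrite real_ltNge ?real1 //; apply: contra P1 => x1; apply/eqP.
by apply: unit_diag_one_sided_eq1; right => mu; rewrite eigE => /xm /le_trans; apply.
Qed.

End UnitDiagonal.
End HermitianSpectrum.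

Local Close Scope complex_scope.
Unset Implicit Arguments.

Theorem theorem2 (R : realType) (n k : nat)
  (hk : (1 <= k)%N) (hkn : (k < n)%N)
  (hnoteven : ~~ (~~ odd n && ~~ odd k))
  (hndiv : forall M : nat, (0 < M)%N -> n <> (M * k)%N)
  (f : 'I_k -> 'I_n) (finj : injective f) :
  let Gk := rowsub f (Gmx R n k) in
  let P := Gk *m adjmx Gk in
  (exists lmin : R[i], eigenvalue P lmin /\
     (forall mu, eigenvalue P mu -> lmin <= mu) /\ lmin < 1) /\
  (exists lmax : R[i], eigenvalue P lmax /\
     (forall mu, eigenvalue P mu -> mu <= lmax) /\ 1 < lmax).
Proof.
clear hnoteven; case: k hk hkn hndiv f finj => [//|m] hk hkn hndiv f finj Gk P.
have PE i j : P i j = (Gmx R n m.+1 *m adjmx (Gmx R n m.+1)) (f i) (f j).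
  exact: rowsub_mul_adjE.
apply: unit_diag_eigenvalue_spread.
- by rewrite /P adjmx_mul adjmxK.
- by move=> i; rewrite PE Gmx_mul_adj_diag.
apply/eqP => P1; have kn : (m.+1 %| n)%N.
  apply: (dvdn_of_mulmod_eq finj) => // i j; have [-> //|ij] := eqVneq i j.
  by apply: (@Gmx_mul_adj_eq0 R) => //; rewrite -PE P1 mxE (negbTE ij).
apply: (hndiv (n %/ m.+1)%N); first by rewrite divn_gt0 // ltnW.
by rewrite divnK.
Qed.
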